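(* Let $(\mathcal{S},d_{\mathcal{S}})$ be a metric state space, $\mathcal{A}$ a finite action set, $\gamma\in[0,1)$, $R:\mathcal{S}\times\mathcal{A}\to\mathbb{R}$ a reward with finite $K^{\mathcal{A}}_{d_{\mathcal{S}},\mathbb{R}}(R)$, and $T$ a transition kernel with $\gamma K^{\mathcal{A}}_{d_{\mathcal{S}},W}(T)<1$. Let $f:\mathbb{R}^{|\mathcal{A}|}\to\mathbb{R}$ be one of the backup operators $\max$, $\mathrm{mean}$, $\epsilon$-greedy, or mellowmax $mm_\beta(x)=\frac{1}{\beta}\log\big(\frac{1}{|\mathcal{A}|}\sum_i e^{\beta x_i}\big)$. Consider Generalized Value Iteration (GVI): starting from $\widehat Q_0$ with finite $K^{\mathcal{A}}_{d_{\mathcal{S}},\mathbb{R}}(\widehat Q_0)$, iterate $\widehat Q_{n+1}(s,a)=R(s,a)+\gamma\int T(s'\mid s,a)\,f\big(\widehat Q_n(s',\cdot)\big)\,ds'$. Then the value function computed by GVI has Lipschitz constant bounded by $\frac{K^{\mathcal{A}}_{d_{\mathcal{S}},\mathbb{R}}(R)}{1-\gamma K^{\mathcal{A}}_{d_{\mathcal{S}},W}(T)}$; precisely, $\lim_{n\to\infty}K^{\mathcal{A}}_{d_{\mathcal{S}},\mathbb{R}}(\widehat Q_{n})\le\frac{K^{\mathcal{A}}_{d_{\mathcal{S}},\mathbb{R}}(R)}{1-\gamma K^{\mathcal{A}}_{d_{\mathcal{S}},W}(T)}$ (in the sense of $\limsup$).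
   Context: For $h:\mathcal{S}\times\mathcal{A}\to\mathbb{R}$, $K^{\mathcal{A}}_{d_{\mathcal{S}},\mathbb{R}}(h):=\sup_{a\in\mathcal{A}}\sup_{s_1\ne s_2}\frac{|h(s_1,a)-h(s_2,a)|}{d_{\mathcal{S}}(s_1,s_2)}$. $W$ is the first Wasserstein metric on distributions over $(\mathcal{S},d_{\mathcal{S}})$, and $K^{\mathcal{A}}_{d_{\mathcal{S}},W}(T):=\sup_{a}\sup_{s_1\ne s_2}\frac{W(T(\cdot\mid s_1,a),T(\cdot\mid s_2,a))}{d_{\mathcal{S}}(s_1,s_2)}$. The $\epsilon$-greedy operator is $x\mapsto(1-\epsilon)\max_i x_i+\epsilon\,\mathrm{mean}(x)$. The listed operators are Lipschitz with constant $1$ from $(\mathbb{R}^{|\mathcal{A}|},\|\cdot\|_\infty)$ to $\mathbb{R}$. *)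

From HB Require Import structures.
From mathcomp Require Import all_boot all_order all_algebra.
From mathcomp Require Import all_classical all_reals all_analysis.
Set Implicit Arguments. Unset Strict Implicit. Unset Printing Implicit Defensive.
Import Order.TTheory GRing.Theory Num.Theory.
Local Open Scope classical_set_scope.
Local Open Scope ring_scope.

Definition is_metric {R : realType} {S : Type} (dS : S -> S -> R) : Prop :=
  [/\ forall x y, 0 <= dS x y,
      forall x y, dS x y = 0 <-> x = y,
      forall x y, dS x y = dS y x &
      forall x y z, dS x z <= dS x y + dS y z].

Definition lipschitz_with {R : realType} {S : Type} (dS : S -> S -> R) (c : R)
  (g : S -> R) : Prop := forall x y, `|g x - g y| <= c * dS x y.

Definition Klip {R : realType} {S A : Type} (dS : S -> S -> R)
  (h : S -> A -> R) : \bar R :=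
  ereal_sup [set r | exists a s1 s2, s1 <> s2 /\
                     r = (`|h s1 a - h s2 a| / dS s1 s2)%:E].

(* First Wasserstein metric, in Kantorovich-Rubinstein (dual) form:
   sup over 1-Lipschitz g of |int g dmu - int g dnu| *)
Definition wasserstein {R : realType} {d : measure_display} {S : measurableType d}
  (dS : S -> S -> R) (mu nu : probability S R) : \bar R :=
  ereal_sup [set r | exists g : S -> R, lipschitz_with dS 1 g /\
     r = (`|Rintegral mu setT g - Rintegral nu setT g|)%:E].

Definition Kwass {R : realType} {d : measure_display} {S : measurableType d} {A : Type}
  (dS : S -> S -> R) (T : S -> A -> probability S R) : \bar R :=
  ereal_sup [set r | exists a s1 s2, s1 <> s2 /\
                     r = (wasserstein dS (T s1 a) (T s2 a) * ((dS s1 s2)^-1)%:E)%E].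

(* Backup operators on R^{|A|}, with A = 'I_n.+1 (finite, nonempty) *)
Inductive backup (R : realType) :=
  | BMax | BMean | BEpsGreedy of R | BMellowmax of R .
Arguments BMax {R}. Arguments BMean {R}.

Definition backup_ok {R : realType} (b : backup R) : Prop :=
  match b with
  | BEpsGreedy e => 0 <= e <= 1
  | BMellowmax beta => 0 < beta
  | _ => True
  end.

Definition opmax {R : realType} {n : nat} (x : 'I_n.+1 -> R) : R :=
  \big[Num.max/x ord0]_(i < n.+1) x i.
Definition opmean {R : realType} {n : nat} (x : 'I_n.+1 -> R) : R :=
  (\sum_(i < n.+1) x i) / n.+1%:R.

Definition apply_backup {R : realType} {n : nat} (b : backup R) (x : 'I_n.+1 -> R) : R :=
  match b with
  | BMax => opmax x
  | BMean => opmean x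
  | BEpsGreedy e => (1 - e) * opmax x + e * opmean x
  | BMellowmax beta => ln ((\sum_(i < n.+1) expR (beta * x i)) / n.+1%:R) / beta
  end.

From HB Require Import structures.
From mathcomp Require Import all_boot all_order all_algebra.
From mathcomp Require Import all_classical all_reals all_analysis.
From mathcomp Require Import ring lra.
Import Order.TTheory GRing.Theory Num.Theory.
Local Open Scope classical_set_scope.
Local Open Scope ring_scope.

(** Every backup operator is monotone and commutes with adding constants, hence
    is 1-Lipschitz for the sup norm on action values.  So if [Q_j] is
    [L]-Lipschitz in the state for every action, then so is [s' |-> f (Q_j s')],
    and by Kantorovich-Rubinstein duality its integrals against [T (. | s1, a)]
    and [T (. | s2, a)] differ by at most [L W <= L K_W(T) d(s1, s2)].  The
    Lipschitz constants thus satisfy [L_(j+1) <= K_R + q L_j] with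
    [q = gamma K_W(T) < 1], and approach the fixed point [K_R / (1 - q)]
    geometrically. *)

Section backup_operators.
Context {R : realType} {n : nat}.
Implicit Types (x y : 'I_n.+1 -> R) (c : R).

Lemma opmax_shift x y c : (forall i, x i <= y i + c) -> opmax x <= opmax y + c.
Proof.
by move=> xy; apply: bigmax_le => [|i _];
  apply: le_trans (xy _) _; rewrite lerD2r le_bigmax.
Qed.

Lemma opmean_shift x y c : (forall i, x i <= y i + c) -> opmean x <= opmean y + c.
Proof.
move=> xy; rewrite /opmean.
have -> : c = (\sum_(i < n.+1) c) / n.+1%:R.
  by rewrite sumr_const card_ord -[c *+ _]mulr_natr mulfK // pnatr_eq0.
rewrite -mulrDl ler_wpM2r ?invr_ge0 // -big_split /=.
by apply: ler_sum => i _; exact: xy.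
Qed.

Lemma mellowmax_shift (beta : R) x y c : 0 < beta -> (forall i, x i <= y i + c) ->
  ln ((\sum_(i < n.+1) expR (beta * x i)) / n.+1%:R) / beta <=
  ln ((\sum_(i < n.+1) expR (beta * y i)) / n.+1%:R) / beta + c.
Proof.
move=> beta0 xy.
have sum_gt0 z : 0 < \sum_(i < n.+1) expR (beta * z i).
  rewrite big_ord_recl ltr_pwDl ?expR_gt0 //.
  by apply: sumr_ge0 => i _; rewrite ltW ?expR_gt0.
have mean_gt0 z : 0 < (\sum_(i < n.+1) expR (beta * z i)) / n.+1%:R.
  by rewrite divr_gt0 ?ltr0n.
have -> : c = ln (expR (beta * c)) / beta by rewrite expRK mulrC mulKf // gt_eqF.
rewrite -mulrDl ler_pM2r ?invr_gt0 // -lnM ?posrE ?expR_gt0 //.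
rewrite ler_ln ?posrE ?mulr_gt0 ?expR_gt0 //.
rewrite mulrAC ler_pM2r ?invr_gt0 ?ltr0n // big_distrl /=.
by apply: ler_sum => i _; rewrite -expRD ler_expR -mulrDr ler_pM2l.
Qed.

Lemma apply_backup_shift (b : backup R) x y c : backup_ok b ->
  (forall i, x i <= y i + c) -> apply_backup b x <= apply_backup b y + c.
Proof.
case: b => [| |e|beta] /= b_ok xy.
- exact: opmax_shift.
- exact: opmean_shift.
- case/andP: b_ok => e0 e1.
  have -> : c = (1 - e) * c + e * c by rewrite -mulrDl subrK mul1r.
  rewrite addrACA; apply: lerD; rewrite -mulrDr ler_wpM2l ?subr_ge0 //.
    exact: opmax_shift.
  exact: opmean_shift.
- exact: mellowmax_shift.
Qed.

Lemma apply_backup_lipschitz (b : backup R) x y c : backup_ok b ->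
  (forall i, `|x i - y i| <= c) -> `|apply_backup b x - apply_backup b y| <= c.
Proof.
move=> b_ok xy; rewrite ler_norml.
have up : apply_backup b x <= apply_backup b y + c.
  by apply: apply_backup_shift => // i; have := xy i; rewrite ler_norml; lra.
have down : apply_backup b y <= apply_backup b x + c.
  by apply: apply_backup_shift => // i; have := xy i; rewrite ler_norml; lra.
apply/andP; split; lra.
Qed.

End backup_operators.

Section metric.
Context {R : realType} {S : Type} {dS : S -> S -> R}.
Hypothesis met : is_metric dS.

Lemma metric_ge0 x y : 0 <= dS x y.
Proof. by case: met. Qed.

Lemma metric_sym x y : dS x y = dS y x.
Proof. by case: met. Qed.

Lemma metric_xx x : dS x x = 0.
Proof. by case: met => _ h _ _; apply/h. Qed.

Lemma metric_gt0 x y : x <> y -> 0 < dS x y.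
Proof.
move=> xy; rewrite lt_neqAle metric_ge0 andbT.
by apply/eqP => /esym; case: met => _ h _ _ /h.
Qed.

Section Klip.
Context {A : Type}.
Implicit Type h : S -> A -> R.

Lemma Klip_ub h s1 s2 a : s1 <> s2 ->
  ((`|h s1 a - h s2 a| / dS s1 s2)%:E <= Klip dS h)%E.
Proof. by move=> s12; apply: ereal_sup_ubound; exists a, s1, s2. Qed.

Lemma Klip_ge0 h : (exists s1 s2 : S, s1 <> s2) -> inhabited A ->
  (0 <= Klip dS h)%E.
Proof.
move=> [s1 [s2 s12]] [a]; apply: le_trans (Klip_ub h _ _ a s12).
by rewrite lee_fin divr_ge0 ?metric_ge0.
Qed.

Lemma Klip_lipschitz h L : Klip dS h = L%:E ->
  forall a, lipschitz_with dS L (fun s => h s a).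
Proof.
move=> hL a s1 s2; have [->|s12] := pselect (s1 = s2).
  by rewrite subrr normr0 metric_xx mulr0.
by have := Klip_ub h _ _ a s12; rewrite hL lee_fin ler_pdivrMr ?metric_gt0.
Qed.

Lemma Klip_le h L : (forall a, lipschitz_with dS L (fun s => h s a)) ->
  (Klip dS h <= L%:E)%E.
Proof.
move=> hL; apply: ge_ereal_sup => _ [a [s1 [s2 [s12 ->]]]].
by rewrite lee_fin ler_pdivrMr ?metric_gt0 ?hL.
Qed.

Lemma Klip_fin h : (exists s1 s2 : S, s1 <> s2) -> inhabited A ->
  (Klip dS h < +oo)%E -> exists2 L : R, 0 <= L & Klip dS h = L%:E.
Proof.
move=> nontrivS inhA; move: (Klip_ge0 h nontrivS inhA).
by case: (Klip dS h) => [L| |] // L0 _; exists L.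
Qed.

Lemma Klip_trivial h : ~ (exists s1 s2 : S, s1 <> s2) -> Klip dS h = -oo%E.
Proof.
move=> trivS; rewrite /Klip -ereal_sup0; congr ereal_sup.
by apply/seteqP; split => // r [a [s1 [s2 [s12 _]]]]; apply: trivS; exists s1, s2.
Qed.

End Klip.
End metric.

Section wasserstein.
Context {R : realType} {d : measure_display} {S : measurableType d}.
Context {dS : S -> S -> R}.
Hypothesis met : is_metric dS.
Implicit Types (P Q : probability S R) (g : S -> R) (c : R).

Lemma wasserstein_ge0 P Q : (0 <= wasserstein dS P Q)%E.
Proof.
apply: le_trans (ereal_sup_ubound _); last first.
  by exists (fun _ => 0); split => // x y; rewrite subrr normr0 mul1r metric_ge0.
by rewrite lee_fin.
Qed.

Lemma wasserstein_refl P : wasserstein dS P P = 0%E.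
Proof.
apply/eqP; rewrite eq_le wasserstein_ge0 andbT.
by apply: ge_ereal_sup => _ [g [_ ->]]; rewrite subrr normr0.
Qed.

Lemma lipschitz_integrable P g c s0 : 0 <= c ->
  lipschitz_with dS c g -> measurable_fun setT g ->
  P.-integrable setT (fun s => (dS s0 s)%:E) -> P.-integrable setT (EFin \o g).
Proof.
move=> c0 g_lip g_mes d_int.
apply: (le_integrable _ _ (g := fun s => ((`|g s0|)%:E + c%:E * (dS s0 s)%:E)%E)) => //.
- exact/measurable_realfun.measurable_EFinP.
- move=> s _ /=; rewrite lee_fin [X in _ <= X]ger0_norm;
    last by rewrite addr_ge0 ?mulr_ge0 ?metric_ge0.
  have -> : g s = g s0 + (g s - g s0) by rewrite addrC subrK.
  apply: le_trans (ler_normD _ _) _; rewrite lerD2l (metric_sym met).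
  exact: g_lip.
- exact: integrableD (finite_measure_integrable_cst _ _ _) (integrableZl _ _ d_int).
Qed.

Lemma lipschitz_integral_le_wasserstein P Q g c : 0 <= c ->
  lipschitz_with dS c g ->
  P.-integrable setT (EFin \o g) -> Q.-integrable setT (EFin \o g) ->
  ((`|Rintegral P setT g - Rintegral Q setT g|)%:E <= c%:E * wasserstein dS P Q)%E.
Proof.
move=> c0 g_lip gP gQ; have [c_eq0|c_neq0] := eqVneq c 0.
  have -> : g = cst (g point).
    apply/funext => x; apply/eqP; rewrite -subr_eq0 -normr_le0.
    by have := g_lip x point; rewrite c_eq0 mul0r.
  have fine_setT (PP : probability S R) : fine (PP setT) = 1.
    by rewrite probability_setT.
  by rewrite !Rintegral_cst // !fine_setT subrr normr0 c_eq0 mul0e.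
have c_gt0 : 0 < c by rewrite lt_neqAle eq_sym c_neq0.
have : ((`|Rintegral P setT (fun x => c^-1 * g x) -
           Rintegral Q setT (fun x => c^-1 * g x)|)%:E <= wasserstein dS P Q)%E.
  apply: ereal_sup_ubound; exists (fun x => c^-1 * g x); split => // x y.
  by rewrite -mulrBr normrM ger0_norm ?invr_ge0 // mul1r ler_pdivrMl.
rewrite !RintegralZl // -mulrBr normrM ger0_norm ?invr_ge0 //.
rewrite -(lee_pmul2l (_ : c%:E \is a fin_num) (_ : 0 < c%:E)%E) ?lte_fin //.
by rewrite -EFinM mulrA mulfV ?mul1r.
Qed.

Section Kwass.
Context {A : Type} (T : S -> A -> probability S R).

Lemma Kwass_ge0 : (exists s1 s2 : S, s1 <> s2) -> inhabited A ->
  (0 <= Kwass dS T)%E.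
Proof.
move=> [s1 [s2 s12]] [a]; apply: le_trans (ereal_sup_ubound _); last by exists a, s1, s2.
by rewrite mule_ge0 ?wasserstein_ge0 // lee_fin invr_ge0 metric_ge0.
Qed.

Lemma wasserstein_le_Kwass x y a :
  (wasserstein dS (T x a) (T y a) <= Kwass dS T * (dS x y)%:E)%E.
Proof.
have [<-|xy] := pselect (x = y); first by rewrite wasserstein_refl (metric_xx met) mule0.
rewrite -lee_pdivrMr ?metric_gt0 //.
by apply: ereal_sup_ubound; exists a, x, y.
Qed.

Lemma lipschitz_integral_le_Kwass g c x y a : 0 <= c ->
  lipschitz_with dS c g ->
  (T x a).-integrable setT (EFin \o g) -> (T y a).-integrable setT (EFin \o g) ->
  ((`|Rintegral (T x a) setT g - Rintegral (T y a) setT g|)%:E <=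
     c%:E * (Kwass dS T * (dS x y)%:E))%E.
Proof.
move=> c0 g_lip gx gy.
apply: (@le_trans _ _ (c%:E * wasserstein dS (T x a) (T y a))%E).
  exact: lipschitz_integral_le_wasserstein.
by rewrite lee_wpmul2l ?lee_fin ?wasserstein_le_Kwass.
Qed.

End Kwass.
End wasserstein.

Lemma le_limn_esup {R : realType} (u v : (\bar R)^nat) :
  (forall k, (u k <= v k)%E) -> (limn_esup u <= limn_esup v)%E.
Proof.
move=> uv; rewrite !limn_esup_lim.
apply: lee_lim; [exact: is_cvg_esups | exact: is_cvg_esups |].
apply: nearW => k; apply: ge_ereal_sup => _ [m /= km <-].
by apply: le_trans (uv m) _; apply: ereal_sup_ubound; exists m.
Qed.

Lemma limn_esup_le_geometric {R : realType} (u : (\bar R)^nat) (B M q : R) :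
  0 <= q < 1 -> (forall k, (u k <= (B + q ^+ k * M)%:E)%E) ->
  (limn_esup u <= B%:E)%E.
Proof.
move=> /andP[q0 q1] u_le; apply: le_trans (le_limn_esup _ _ u_le) _.
suff /cvg_limn_einf_sup[_ ->] : (B + q ^+ k * M)%:E @[k --> \oo] --> B%:E by [].
apply: cvg_EFin; first exact: nearW.
rewrite -[X in _ --> X]addr0; apply: cvgD; first exact: cvg_cst.
by rewrite -(mul0r M); apply: cvgMr_tmp; apply: cvg_expr; rewrite ger0_norm.
Qed.

Definition gvi_update {R : realType} {d : measure_display} {S : measurableType d}
    {n : nat} (gamma : R) (Rw : S -> 'I_n.+1 -> R)
    (T : S -> 'I_n.+1 -> probability S R) (b : backup R)
    (Q : S -> 'I_n.+1 -> R) : S -> 'I_n.+1 -> R :=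
  fun s a => Rw s a + gamma * Rintegral (T s a) setT (fun s' => apply_backup b (Q s')).

Section generalized_value_iteration.
Context {R : realType} {d : measure_display} {S : measurableType d} {n : nat}.
Context {dS : S -> S -> R} {T : S -> 'I_n.+1 -> probability S R}.
Context {gamma q KR : R} {Rw : S -> 'I_n.+1 -> R} {b : backup R}.
Hypothesis met : is_metric dS.
Hypothesis lipschitz_measurable :
  forall g c, lipschitz_with dS c g -> measurable_fun setT g.
Hypothesis metric_integrable :
  forall s a s0, (T s a).-integrable setT (fun s' => (dS s0 s')%:E).
Hypotheses (gamma0 : 0 <= gamma) (gamma_Kwass : (gamma%:E * Kwass dS T)%E = q%:E).
Hypothesis Rw_lip : forall a, lipschitz_with dS KR (fun s => Rw s a).
Hypothesis b_ok : backup_ok b.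

Lemma gvi_update_lipschitz Q (L : R) : 0 <= L ->
  (forall a, lipschitz_with dS L (fun s => Q s a)) ->
  forall a, lipschitz_with dS (KR + q * L) (fun s => gvi_update gamma Rw T b Q s a).
Proof.
move=> L_ge0 Q_lip a x y; rewrite /gvi_update.
set F := fun s' => apply_backup b (Q s').
have F_lip : lipschitz_with dS L F.
  by move=> u v; apply: apply_backup_lipschitz => // i; exact: Q_lip.
have F_int s : (T s a).-integrable setT (EFin \o F).
  exact: lipschitz_integrable met _ _ _ x L_ge0 F_lip (lipschitz_measurable _ _ F_lip)
    (metric_integrable s a x).
set I1 := Rintegral _ _ _; set I2 := Rintegral _ _ _.
have contract : gamma * `|I1 - I2| <= q * L * dS x y.
  have := lipschitz_integral_le_Kwass met T _ _ x y a L_ge0 F_lip (F_int x) (F_int y).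
  have gammaE0 : (0 <= gamma%:E)%E by rewrite lee_fin.
  move=> /(lee_wpmul2l gammaE0).
  by rewrite muleCA (muleA gamma%:E) gamma_Kwass -!EFinM lee_fin mulrA (mulrC L).
have -> : Rw x a + gamma * I1 - (Rw y a + gamma * I2) =
          (Rw x a - Rw y a) + gamma * (I1 - I2) by ring.
rewrite mulrDl; apply: le_trans (ler_normD _ _) _.
by rewrite normrM ger0_norm // lerD ?Rw_lip.
Qed.

Hypotheses (KR0 : 0 <= KR) (q0 : 0 <= q) (q1 : q < 1).

Lemma gvi_lipschitz_bound (Q : nat -> S -> 'I_n.+1 -> R) (L0 : R) :
  (forall a, lipschitz_with dS L0 (fun s => Q 0%N s a)) ->
  (forall j s a, Q j.+1 s a = gvi_update gamma Rw T b (Q j) s a) ->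
  forall j a, lipschitz_with dS (KR / (1 - q) + q ^+ j * `|L0 - KR / (1 - q)|)
                              (fun s => Q j s a).
Proof.
move=> Q0_lip Q_next; set B := KR / (1 - q); set M := `|L0 - B|.
have B0 : 0 <= B by rewrite divr_ge0 // subr_ge0 ltW.
have B_fixed : KR + q * B = B by rewrite /B; field; rewrite subr_eq0 gt_eqF.
elim=> [|j IH] a x y.
  apply: le_trans (Q0_lip a x y) _; rewrite ler_wpM2r ?metric_ge0 //.
  by rewrite expr0 mul1r /M; have := ler_norm (L0 - B); lra.
rewrite !Q_next; apply: le_trans (gvi_update_lipschitz _ _ _ IH a x y) _.
  by rewrite addr_ge0 // mulr_ge0 ?exprn_ge0 // normr_ge0.
by rewrite mulrDr addrA B_fixed mulrA -exprS.
Qed.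

End generalized_value_iteration.

Theorem theorem3 (R : realType) (d : measure_display) (S : measurableType d)
  (n : nat) (dS : S -> S -> R) (gamma : R) (Rw : S -> 'I_n.+1 -> R)
  (T : S -> 'I_n.+1 -> probability S R) (b : backup R)
  (Q : nat -> S -> 'I_n.+1 -> R) :
  is_metric dS ->
  (forall (g : S -> R) (c : R), lipschitz_with dS c g -> measurable_fun setT g) ->
  (forall s a s0, (T s a).-integrable setT (fun s' => (dS s0 s')%:E)) ->
  0 <= gamma < 1 ->
  (Klip dS Rw < +oo)%E ->
  (gamma%:E * Kwass dS T < 1)%E ->
  backup_ok b ->
  (Klip dS (Q 0%N) < +oo)%E ->
  (forall k s a, Q k.+1 s a =
     Rw s a + gamma * Rintegral (T s a) setT (fun s' => apply_backup b (Q k s'))) ->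
  (limn_esup (fun k => Klip dS (Q k)) <= Klip dS Rw / (1 - gamma%:E * Kwass dS T))%E.
Proof.
move=> met lip_mes d_int /andP[gamma0 _] KR_fin contraction b_ok KQ0_fin Q_next.
have [nontrivS | trivS] := pselect (exists s1 s2 : S, s1 <> s2); last first.
  have -> : (fun j => Klip dS (Q j)) = cst -oo%E.
    by apply/funext => j; exact: Klip_trivial.
  by have [_ ->] := cvg_limn_einf_sup (cvg_cst (-oo%E : \bar R)); rewrite leNye.
have inhA : inhabited 'I_n.+1 by constructor; exact: ord0.
have [KR KR0 hKR] := Klip_fin met Rw nontrivS inhA KR_fin.
have [L0 _ hL0] := Klip_fin met (Q 0%N) nontrivS inhA KQ0_fin.
have [q q0 hq] : exists2 q : R, 0 <= q & (gamma%:E * Kwass dS T)%E = q%:E.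
  have : (0 <= gamma%:E * Kwass dS T)%E.
    by rewrite mule_ge0 ?lee_fin ?(Kwass_ge0 met T nontrivS inhA).
  by move: contraction; case: (_ * _)%E => // q _ q0; exists q.
have q1 : q < 1 by rewrite -lte_fin -hq.
have Rw_lip := Klip_lipschitz met _ _ hKR.
have Q0_lip := Klip_lipschitz met _ _ hL0.
have Q_lip := gvi_lipschitz_bound met lip_mes d_int gamma0 hq Rw_lip b_ok KR0 q0 q1
  _ _ Q0_lip Q_next.
rewrite hKR hq -EFinB inver subr_eq0 eq_sym lt_eqF // -EFinM.
have q01 : 0 <= q < 1 by rewrite q0 q1.
by apply: limn_esup_le_geometric q01 _ => j; exact: Klip_le.
Qed.
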